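(* Let $p,q$ be integers with $1+|p|<|q|$ and let $t(x)=x^2+px-q$. Then every polynomial $f\in\mathbb{Z}[x]$ is equivalent modulo $t$ to a reduced polynomial, i.e. there is $\widetilde f(x)=\sum_{i=0}^m b_ix^i\in\mathbb{Z}[x]$ with $|b_i|<|q|$ for all $i$ such that $t$ divides $f-\widetilde f$.
   Context: A polynomial $\sum_i a_ix^i\in\mathbb{Z}[x]$ is called reduced (with respect to $q$) if $|a_i|<|q|$ for all $i$. *)

From HB Require Import structures.
From mathcomp Require Import all_boot all_order all_algebra.
Set Implicit Arguments. Unset Strict Implicit. Unset Printing Implicit Defensive.
Import Order.TTheory GRing.Theory Num.Theory.
Local Open Scope ring_scope.

(* A polynomial in Z[x] is reduced w.r.t. q if all its coefficients have
   absolute value < |q|.  Coefficients beyond the degree are 0, so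
   quantifying over all i is the same as over i < size p. *)
Definition reduced (q : int) (f : {poly int}) : Prop :=
  forall i : nat, `|f`_i| < `|q|.

(* Write f = a + 'X * f1 and divide a = c * q + r with |r| < |q|, rounding
   towards zero.  Since q = 'X^2 + p 'X modulo t, f is congruent to
   r + 'X * (f1 + c (p + 'X)): the constant coefficient is reduced and the
   rest is handled recursively.  The recursion terminates because the
   carry c costs at most |c| (|p| + 1) in the l1-norm of the coefficients
   while it removes |c| |q| >= |c| (|p| + 2), so 2 * l1-norm + size drops. *)
From mathcomp Require Import all_boot all_order all_algebra.
From mathcomp Require Import zify ring.
Set Implicit Arguments.
Unset Strict Implicit.
Unset Printing Implicit Defensive.

Import Order.TTheory GRing.Theory Num.Theory.
Local Open Scope ring_scope.

Section PolyNorm1.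

Variable R : numDomainType.
Implicit Types (a : R) (f g : {poly R}).

Definition norm1 f : R := \sum_(i < size f) `|f`_i|.

Lemma norm1E f n : (size f <= n)%N -> norm1 f = \sum_(i < n) `|f`_i|.
Proof.
move=> le_fn; rewrite /norm1 (big_ord_widen _ (fun i => `|f`_i|) le_fn).
rewrite big_mkcond; apply: eq_bigr => i _; case: ltnP => // le_fi.
by rewrite nth_default ?normr0.
Qed.

Lemma norm1_ge0 f : 0 <= norm1 f.
Proof. exact: sumr_ge0. Qed.

Lemma norm1D f g : norm1 (f + g) <= norm1 f + norm1 g.
Proof.
set n := maxn (size f) (size g).
rewrite (norm1E (size_polyD f g)) (@norm1E f n) ?leq_maxl //.
rewrite (@norm1E g n) ?leq_maxr // -big_split /=.
by apply: ler_sum => i _; rewrite coefD ler_normD.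
Qed.

Lemma norm1_cons a f : norm1 (cons_poly a f) = `|a| + norm1 f.
Proof.
rewrite (@norm1E _ (size f).+1); last by rewrite size_cons_poly; case: ifP.
rewrite big_ord_recl coef_cons /= (norm1E (leqnn _)).
by under eq_bigr do rewrite coef_cons.
Qed.

Lemma norm1C a : norm1 a%:P = `|a|.
Proof.
have -> : a%:P = cons_poly a 0 by rewrite cons_poly_def mul0r add0r.
by rewrite norm1_cons /norm1 size_poly0 big_ord0 addr0.
Qed.

End PolyNorm1.

Lemma cons_coef0_drop_poly (R : nzSemiRingType) (f : {poly R}) :
  f = cons_poly f`_0 (drop_poly 1 f).
Proof.
by apply/polyP => -[|i]; rewrite coef_cons //= coef_drop_poly addn1.
Qed.

Lemma divz_trunc (a q : int) : q != 0 -> exists c r : int,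
  [/\ a = c * q + r, `|r| < `|q| & `|a| = `|c| * `|q| + `|r|].
Proof.
move=> q_neq0; set k := (`|a| %/ `|q|)%N; set s := (`|a| %% `|q|)%N.
have def_a : `|a|%N = (k * `|q| + s)%N by rewrite [LHS](divn_eq _ `|q|%N).
have lt_s : (s < `|q|)%N by rewrite ltn_pmod ?absz_gt0.
have [a_ge0|a_lt0] := lerP 0 a; have [q_ge0|q_lt0] := lerP 0 q.
- by exists k, s; split; nia.
- by exists (- k%:Z), s; split; nia.
- by exists (- k%:Z), (- s%:Z); split; nia.
- by exists k, (- s%:Z); split; nia.
Qed.

Section Reduction.

Variables p q : int.
Hypothesis hpq : 1 + `|p| < `|q|.

Local Notation t := ('X^2 + p%:P * 'X - q%:P).
Local Notation weight f := (2 * norm1 f + (size f%R)%:Z).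

Lemma reduce_coef0 (f : {poly int}) : f != 0 -> exists r c (g : {poly int}),
  [/\ `|r| < `|q|, f = cons_poly r g - c%:P * t & weight g < weight f].
Proof.
move=> f_neq0; have q_neq0 : q != 0 by apply: contraTneq hpq => ->; lia.
set f1 := drop_poly 1 f.
have [c [r [def_f0 lt_r norm_f0]]] := divz_trunc f`_0 q_neq0.
have norm_f : norm1 f = `|f`_0| + norm1 f1.
  by rewrite {1}[f]cons_coef0_drop_poly norm1_cons.
have size_f1 : size f1 = (size f - 1)%N by rewrite size_drop_poly.
have size_f_gt0 : (0 < size f)%N by rewrite size_poly_gt0.
exists r, c, (f1 + cons_poly (c * p) c%:P); split=> //.
  rewrite {1}[f]cons_coef0_drop_poly def_f0 !cons_poly_def polyCD !polyCM.
  by ring.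
have [-> | c_neq0] := eqVneq c 0.
  rewrite mul0r polyC0 cons_poly_def mul0r !addr0.
  by have := normr_ge0 f`_0; lia.
have norm_g : norm1 (f1 + cons_poly (c * p) c%:P) <= norm1 f1 + `|c| * `|p| + `|c|.
  by rewrite (le_trans (norm1D _ _)) // norm1_cons norm1C normrM addrA.
have size_g : (size (f1 + cons_poly (c * p) c%:P)%R <= maxn (size f - 1) 2)%N.
  rewrite -size_f1 (leq_trans (size_polyD _ _)) // geq_max leq_maxl /=.
  rewrite (leq_trans _ (leq_maxr _ _)) // size_cons_poly size_polyC.
  by case: ifP; rewrite // ltnS leq_b1.
have carry_cost : `|c| * `|p| + 2 * `|c| <= `|c| * `|q|.
  have c_gt0 : 0 < `|c| by rewrite normr_gt0.
  nia.
by have := normr_ge0 r; have := norm1_ge0 f1; lia.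
Qed.

Lemma reduced_mod_t (f : {poly int}) :
  exists2 g : {poly int}, reduced q g & exists h : {poly int}, f - g = h * t.
Proof.
have [n] : exists n : nat, weight f < n%:Z.
  by exists `|weight f|.+1; have := norm1_ge0 f; lia.
elim: n f => [|n IH] f lt_f; first by have := norm1_ge0 f; lia.
have [-> | f_neq0] := eqVneq f 0.
  by exists 0; [move=> i; rewrite coef0 normr0; lia | exists 0; rewrite subr0 mul0r].
have [r [c [g [lt_r def_f lt_g]]]] := reduce_coef0 f_neq0.
have /IH [g' red_g' [h def_g]] : weight g < n%:Z by lia.
exists (cons_poly r g'); first by move=> [|i]; rewrite coef_cons //=; apply: red_g'.
exists (h * 'X - c%:P).
by rewrite def_f !cons_poly_def -[g](subrK g') def_g; ring.
Qed.

End Reduction.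

Theorem proposition1 (p q : int) (hpq : 1 + `|p| < `|q|) (f : {poly int}) :
  exists2 g : {poly int}, reduced q g &
    exists h : {poly int}, f - g = h * ('X^2 + p%:P * 'X - q%:P).
Proof. exact: reduced_mod_t. Qed.
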